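(* Let $r>1$ and $s>1$ be coprime integers. Suppose $G$ is a finite group containing elements $x$ and $y$ such that $x^r$ is conjugate to $y^r$ in $G$ and $x^s$ is conjugate to $y^s$ in $G$, but $x^d$ is not conjugate to $y^d$ in $G$ for every proper divisor $d$ of $r$ and every proper divisor $d$ of $s$. Then $|G|$ is divisible by $rs$ and $|G|\neq rs$. If $rs$ is even, then $|G|\neq 2rs$, and if $rs\equiv 2\pmod 4$, then $|G|$ is divisible by $2rs$.
   Context: A proper divisor of a positive integer $n$ is a positive divisor of $n$ strictly less than $n$. *)

From mathcomp Require Import all_boot all_fingroup.
Set Implicit Arguments. Unset Strict Implicit. Unset Printing Implicit Defensive.
Local Open Scope group_scope.

Definition conj_in (gT : finGroupType) (G : {set gT}) (a b : gT) : Prop :=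
  exists2 g, g \in G & a ^ g = b.

Definition proper_divisor (d n : nat) : Prop := (0 < d)%N /\ (d %| n)%N /\ (d < n)%N.

From mathcomp Require Import all_boot all_fingroup.
From mathcomp Require Import cyclic pgroup sylow zify.
Set Implicit Arguments. Unset Strict Implicit. Unset Printing Implicit Defensive.
Local Open Scope group_scope.

(* Let pi be the set of primes dividing r.  As s is a pi'-number, the relation
   for s-th powers conjugates the pi-parts, x_pi ^ g = y_pi, and as r is a
   pi-number the relation for r-th powers conjugates the pi'-parts,
   x_pi' ^ h = y_pi'.  Then h conjugates x ^ d to y ^ d for d = gcd(#[x], r),
   so minimality forces r | #[x]; symmetrically s | #[x], whence rs | |G|.
   If #[x] = |G| then G is cyclic, conjugation is trivial and x = y.
   If |G| = 2rs with r even, then <[x]> has index 2, h g^-1 acts on it as an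
   odd power and so fixes the involution x_pi ^ (r/2); hence h conjugates
   x ^ (r/2) to y ^ (r/2).  If rs = 2 mod 4 and 2rs does not divide |G|, then
   4 does not divide |G|; all involutions of such a group are conjugate (its
   Sylow 2-subgroups have order 2), so x ^ (r/2) and y ^ (r/2), of even order
   with conjugate squares, are conjugate. *)

Lemma half_proper_divisor n : (1 < n)%N -> ~~ odd n -> proper_divisor (n %/ 2) n.
Proof.
move=> n_gt1; rewrite -dvdn2 => /dvdnP[k n_eq]; rewrite n_eq mulnK //.
by split; last split; rewrite ?dvdn_mulr //; lia.
Qed.

Lemma not_dvdn4 n m :
  (m %% 4 = 2)%N -> (m %| n)%N -> ~~ (2 * m %| n)%N -> ~~ (4 %| n)%N.
Proof.
move=> m_mod4 /dvdnP[q ->]; have m_gt0 : (0 < m)%N by lia.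
have m_eq : m = (2 * (2 * (m %/ 4) + 1))%N by lia.
rewrite dvdn_pmul2r // m_eq mulnCA -[4]/(2 * 2)%N dvdn_pmul2l //.
by rewrite !dvdn2 oddM oddD oddM andbT.
Qed.

Lemma exp2_dvdn_le1 n k : ~~ (4 %| n)%N -> (2 ^ k %| n)%N -> (k <= 1)%N.
Proof.
move=> n4 kn; rewrite leqNgt; apply: contra n4 => k_gt1.
exact: dvdn_trans (dvdn_exp2l 2 k_gt1) kn.
Qed.

Section ConjugatePowers.

Variable gT : finGroupType.
Implicit Types (a b h g : gT) (pi : nat_pred).

Lemma conjX_dvdn a b h k d :
  #[a] = #[b] -> (gcdn #[a] k %| d)%N -> (a ^+ k) ^ h = b ^+ k ->
  (a ^+ d) ^ h = b ^+ d.
Proof.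
move=> oab /dvdnP[m ->] akh.
have [j _ dvd_a] := Bezoutl k (order_gt0 a).
(* [gcdn #[a] k + j * k] is a multiple of the common order, so
   [c ^+ gcdn #[a] k] is the same power of [c ^+ k] for [c = a] and [c = b]. *)
have gcdE (c : gT) : #[c] = #[a] -> c ^+ gcdn #[a] k = ((c ^+ k) ^+ j)^-1.
  move=> oc; apply/eqP; rewrite eq_sym eq_invg_mul -expgM -expgD.
  by rewrite -order_dvdn oc addnC mulnC.
by rewrite mulnC !expgM (gcdE a) // (gcdE b) // !conjXg conjVg conjXg akh.
Qed.

Lemma conjX_coprime a b h k :
  coprime k #[a] -> coprime k #[b] -> (a ^+ k) ^ h = b ^+ k -> a ^ h = b.
Proof.
move=> ka kb akh.
have orderX (c : gT) : coprime k #[c] -> #[c ^+ k] = #[c].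
  by move=> kc; rewrite orderXgcd gcdnC (eqP kc) divn1.
have oab : #[a] = #[b] by rewrite -(orderX a) // -(orderX b) // -akh orderJ.
rewrite -(expg1 a) -(expg1 b); apply: conjX_dvdn oab _ akh.
by rewrite gcdnC (eqP ka).
Qed.

Lemma constt_conjX pi a b h k :
  pi^'.-nat k -> (a ^+ k) ^ h = b ^+ k -> a.`_pi ^ h = b.`_pi.
Proof.
move=> pi'k akh.
have k_co (c : gT) : coprime k #[c.`_pi].
  by rewrite coprime_sym (pnat_coprime (p_elt_constt pi c)).
by apply: (conjX_coprime (k_co a) (k_co b)); rewrite -!consttX -consttJ akh.
Qed.

Lemma conjg_constt pi a b h :
  a.`_pi ^ h = b.`_pi -> a.`_pi^' ^ h = b.`_pi^' -> a ^ h = b.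
Proof. by move=> ah ah'; rewrite -(consttC pi a) conjMg ah ah' consttC. Qed.

Section CoprimeExponents.

Variables (r s : nat) (a b h g : gT).
Hypotheses (r_gt0 : (0 < r)%N) (s_gt0 : (0 < s)%N) (coprime_rs : coprime r s).
Hypotheses (ahr : (a ^+ r) ^ h = b ^+ r) (ags : (a ^+ s) ^ g = b ^+ s).

Lemma conjX_coprime_constt :
  a.`_\pi(r) ^ g = b.`_\pi(r) /\ a.`_\pi(r)^' ^ h = b.`_\pi(r)^'.
Proof.
split; first by apply: constt_conjX ags; rewrite -coprime_pi'.
by apply: constt_conjX ahr; rewrite pnatNK pnat_pi.
Qed.

Lemma order_conjX_coprime : #[a] = #[b].
Proof.
have [ag ah'] := conjX_coprime_constt.
rewrite -(partnC \pi(r) (order_gt0 a)) -(partnC \pi(r) (order_gt0 b)).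
by rewrite -!order_constt -ag -ah' !orderJ.
Qed.

Lemma conjX_gcd_order : (a ^+ gcdn #[a] r) ^ h = b ^+ gcdn #[a] r.
Proof.
have [ag ah'] := conjX_coprime_constt.
apply: (conjg_constt (pi := \pi(r))); rewrite !consttX; last by rewrite conjXg ah'.
apply: (conjX_dvdn (k := r)); first by rewrite -ag orderJ.
    rewrite dvdn_gcd dvdn_gcdr andbT; apply: dvdn_trans (dvdn_gcdl _ _) _.
  exact: order_dvdG (cycle_constt _ a).
by rewrite -!consttX -consttJ ahr.
Qed.

End CoprimeExponents.

Lemma dvdn_order_conjX_minimal (G : {group gT}) r s x y h g :
  (0 < r)%N -> (0 < s)%N -> coprime r s -> h \in G ->
  (x ^+ r) ^ h = y ^+ r -> (x ^+ s) ^ g = y ^+ s ->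
  (forall d, proper_divisor d r -> ~ conj_in G (x ^+ d) (y ^+ d)) ->
  (r %| #[x])%N.
Proof.
move=> r_gt0 s_gt0 co_rs Gh xhr xgs min_r; apply/gcdn_idPr/eqP.
apply: contraT => ne_r; exfalso; apply: (min_r (gcdn #[x] r)).
  split; first by rewrite gcdn_gt0 order_gt0.
  by split; rewrite ?dvdn_gcdr // ltn_neqAle ne_r dvdn_leq ?dvdn_gcdr.
by exists h; last exact: conjX_gcd_order xgs.
Qed.

Lemma orderX_even (z : gT) k : ~~ odd #[z] -> odd k -> ~~ odd #[z ^+ k].
Proof.
move=> z_even k_odd; apply: contra z_even => zk_odd.
apply: (@dvdn_odd _ (k * #[z ^+ k])); last by rewrite oddM k_odd.
by rewrite order_dvdn expgM expg_order.
Qed.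

Lemma conj_cycle_involution (x k u : gT) :
  x ^ k \in <[x]> -> ~~ odd #[x] -> u \in <[x]> -> u ^+ 2 = 1 -> u ^ k = u.
Proof.
case/cycleP=> t xkt x_even /cycleP[j ->] u2.
have co_xt : coprime #[x] t.
  have := divnK (dvdn_gcdl #[x] t); rewrite -orderXgcd -xkt orderJ.
  by rewrite -{3}[#[x]]muln1 => /eqP; rewrite eqn_pmul2l ?order_gt0.
have t_odd : odd t by rewrite -coprime2n (coprime_dvdl _ co_xt) ?dvdn2.
by rewrite conjXg xkt -expgM mulnC expgM -(expg_mod _ u2) modn2 t_odd.
Qed.

End ConjugatePowers.

Section InvolutionsOfTwiceOddGroups.

Variable gT : finGroupType.

Lemma eq_order2_cycle (u v : gT) : u \in <[v]> -> #[u] = 2 -> #[v] = 2 -> u = v.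
Proof.
case/cycleP=> i -> ou ov; rewrite -expg_mod_order ov.
move: ou; rewrite -expg_mod_order ov.
by case: (i %% 2)%N (ltn_mod i 2) => [|[|]] //; rewrite expg0 order1.
Qed.

Lemma order_constt2 (G : {group gT}) z :
  ~~ (4 %| #|G|)%N -> z \in G -> ~~ odd #[z] -> #[z.`_2] = 2%N.
Proof.
move=> G4 Gz z_even; rewrite order_constt p_part.
have : (logn 2 #[z] <= 1)%N.
  apply: exp2_dvdn_le1 G4 _; rewrite -p_part.
  exact: dvdn_trans (dvdn_part _ _) (order_dvdG Gz).
have : (0 < logn 2 #[z])%N by rewrite logn_gt0 mem_primes /= order_gt0 dvdn2 z_even.
by case: (logn 2 #[z]) => [|[|]].
Qed.

Lemma involution_cycle_Sylow (H P : {group gT}) z :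
  ~~ (4 %| #|H|)%N -> 2.-Sylow(H) P -> z \in H -> #[z] = 2%N ->
  exists2 c, c \in H & <[z]> :^ c = P.
Proof.
move=> H4 sylP Hz oz; have ocz : #|<[z]>| = 2%N := oz.
have pz : 2.-group <[z]> by rewrite /pgroup ocz.
have [c Hc zcP] := Sylow_Jsub sylP (etrans (cycle_subG z H) Hz) pz.
exists c => //; apply/eqP; rewrite eqEcard zcP cardJg ocz /=.
have [m oP] := p_natP (pHall_pgroup sylP).
have : (m <= 1)%N by apply: exp2_dvdn_le1 H4 _; rewrite -oP cardSg ?(pHall_sub sylP).
by rewrite oP; case: m {oP} => [|[|]].
Qed.

Lemma conj_in_order2 (H : {group gT}) u v :
  ~~ (4 %| #|H|)%N -> u \in H -> v \in H -> #[u] = 2%N -> #[v] = 2%N ->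
  conj_in H u v.
Proof.
move=> H4 Hu Hv ou ov; have [P sylP] := Sylow_exists 2 H.
have [c Hc uP] := involution_cycle_Sylow H4 sylP Hu ou.
have [d Hd vP] := involution_cycle_Sylow H4 sylP Hv ov.
exists (c * d^-1); first by rewrite groupM ?groupV.
apply: eq_order2_cycle; rewrite ?orderJ //.
by rewrite -(conjsgK d <[v]>) vP -uP -conjsgM memJ_conjg cycle_id.
Qed.

Lemma conj_in_of_conj_sqr (G : {group gT}) a b g :
  ~~ (4 %| #|G|)%N -> a \in G -> b \in G -> g \in G ->
  ~~ odd #[a] -> ~~ odd #[b] -> (a ^+ 2) ^ g = b ^+ 2 -> conj_in G a b.
Proof.
move=> G4 Ga Gb Gg a_even b_even ag2.
have ag' : a.`_2^' ^ g = b.`_2^' by apply: constt_conjX ag2; rewrite pnatNK pnat_id.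
have constt_in_G (z : gT) pi : z \in G -> z.`_pi \in G.
  by move=> Gz; apply: subsetP (cycle_constt pi z); rewrite cycle_subG.
have constt_cent (z : gT) : z.`_2 \in 'C[z.`_2^'].
  by apply/cent1P; apply: (centsP (cycle_abelian z)); apply: cycle_constt.
(* Move a's 2-part onto b's inside the centraliser of b's 2'-part. *)
set H := 'C_G[b.`_2^'].
have Hag : a.`_2 ^ g \in H.
  by rewrite inE groupJ ?constt_in_G // -ag' cent1J memJ_conjg constt_cent.
have Hb : b.`_2 \in H by rewrite inE constt_in_G ?constt_cent.
have H4 : ~~ (4 %| #|H|)%N.
  by apply: contra G4 => /dvdn_trans; apply; rewrite cardSg ?subsetIl.
have oag : #[a.`_2 ^ g] = 2%N by rewrite orderJ (order_constt2 G4).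
have [c Hc agc] := conj_in_order2 H4 Hag Hb oag (order_constt2 G4 Gb b_even).
have /setIP[Gc /cent1P cbc] := Hc.
exists (g * c); first by rewrite groupM.
apply: (conjg_constt (pi := 2)); first by rewrite conjgM.
by rewrite conjgM ag'; apply/conjg_fixP/commgP/commute_sym.
Qed.

End InvolutionsOfTwiceOddGroups.

Section Theorem6p6.

Variables (r s : nat) (gT : finGroupType) (G : {group gT}) (x y h g : gT).
Hypotheses (r_gt1 : (1 < r)%N) (s_gt1 : (1 < s)%N) (coprime_rs : coprime r s).
Hypotheses (Gx : x \in G) (Gy : y \in G) (Gh : h \in G) (Gg : g \in G).
Hypotheses (xhr : (x ^+ r) ^ h = y ^+ r) (xgs : (x ^+ s) ^ g = y ^+ s).
Hypothesis min_r : forall d, proper_divisor d r -> ~ conj_in G (x ^+ d) (y ^+ d).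
Hypothesis min_s : forall d, proper_divisor d s -> ~ conj_in G (x ^+ d) (y ^+ d).

Let r_gt0 : (0 < r)%N := ltnW r_gt1.
Let s_gt0 : (0 < s)%N := ltnW s_gt1.

Lemma dvdn_rs_order : (r * s %| #[x])%N.
Proof.
rewrite Gauss_dvd // (dvdn_order_conjX_minimal _ _ _ Gh xhr xgs min_r) //=.
by apply: (dvdn_order_conjX_minimal _ _ _ Gg xgs xhr min_s); rewrite // coprime_sym.
Qed.

Lemma order_neq_card : #[x] <> #|G|.
Proof.
move=> oxG; apply: (min_r (d := 1)); first by split; rewrite ?dvd1n.
have cycG : <[x]> = G by apply/eqP; rewrite eqEcard cycle_subG Gx -oxG leqnn.
have fix_xk c k : c \in G -> (x ^+ k) ^ c = x ^+ k.
  by rewrite -cycG => /cycleP[i ->]; apply/conjg_fixP/commgP/commuteX2/commute_refl.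
have x1r : (x ^+ r) ^ 1 = y ^+ r by rewrite conjg1 -xhr fix_xk.
have x1s : (x ^+ s) ^ 1 = y ^+ s by rewrite conjg1 -xgs fix_xk.
have [x1 x1'] := conjX_coprime_constt r_gt0 s_gt0 coprime_rs x1r x1s.
by exists 1; rewrite // !expg1; apply: conjg_constt x1 x1'.
Qed.

Lemma card_neq_2rs : ~~ odd r -> #|G| <> (2 * (r * s))%N.
Proof.
move=> r_even oG; have rs_gt0 : (0 < r * s)%N by rewrite muln_gt0 r_gt0.
have ox : #[x] = (r * s)%N.
  have [q oxq] := dvdnP dvdn_rs_order.
  have : (q %| 2)%N by rewrite -(dvdn_pmul2r rs_gt0) -oxq -oG order_dvdG.
  have := order_neq_card; rewrite oG oxq.
  by case: q {oxq} => [|[|[|q]]] ne q2 //; rewrite ?mul1n.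
have x_even : ~~ odd #[x] by rewrite ox oddM (negbTE r_even).
have nX : <[x]> <| G.
  apply: index2_normal; first by rewrite cycle_subG.
  by rewrite -divgS ?cycle_subG // oG [#|<[x]>|]ox mulnK.
set k := h * g^-1.
have xk : x ^ k \in <[x]>.
  by rewrite memJ_norm ?cycle_id // (subsetP (normal_norm nX)) // groupM ?groupV.
set e := (r %/ 2)%N.
have [xg xh'] := conjX_coprime_constt r_gt0 s_gt0 coprime_rs xhr xgs.
have u2 : (x.`_\pi(r) ^+ e) ^+ 2 = 1.
  apply/eqP; rewrite -expgM divnK ?dvdn2 // -order_dvdn.
  have co_s : coprime #[x.`_\pi(r)] s.
    by rewrite (pnat_coprime (p_elt_constt _ _)) // -coprime_pi'.
  by rewrite -(Gauss_dvdl _ co_s) -ox (order_dvdG (cycle_constt _ x)).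
have uk := conj_cycle_involution xk x_even (groupX e (cycle_constt _ x)) u2.
apply: (min_r (half_proper_divisor r_gt1 r_even)).
exists h => //; apply: (conjg_constt (pi := \pi(r))); rewrite !consttX.
  by rewrite -(mulgKV g h) -/k conjgM uk conjXg xg.
by rewrite conjXg xh'.
Qed.

Lemma dvdn_2rs_card : (r * s %% 4 = 2)%N -> ~~ odd r -> (2 * (r * s) %| #|G|)%N.
Proof.
move=> rs_mod4 r_even; apply: contraT => not_dvd; exfalso.
set e := (r %/ 2)%N; have re : r = (e * 2)%N by rewrite divnK ?dvdn2.
have e_odd : odd e.
  apply/negPn; rewrite -dvdn2; apply/negP => /dvdnP[t e_eq].
  by move: rs_mod4; rewrite re e_eq (_ : _ * s = t * s * 4)%N ?modnMl //; nia.
have G4 : ~~ (4 %| #|G|)%N.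
  exact: not_dvdn4 rs_mod4 (dvdn_trans dvdn_rs_order (order_dvdG Gx)) not_dvd.
have oxy : #[x] = #[y] := order_conjX_coprime r_gt0 s_gt0 coprime_rs xhr xgs.
have x_even : ~~ odd #[x].
  by rewrite -dvdn2 (dvdn_trans _ dvdn_rs_order) // dvdn_mulr // dvdn2.
apply: (min_r (half_proper_divisor r_gt1 r_even)).
apply: (conj_in_of_conj_sqr G4 (groupX e Gx) (groupX e Gy) Gh).
- exact: orderX_even.
- by rewrite orderX_even -?oxy.
- by rewrite -!expgM -re.
Qed.

End Theorem6p6.

Theorem theorem6p6 (r s : nat) (gT : finGroupType) (G : {group gT}) (x y : gT) :
  (1 < r)%N -> (1 < s)%N -> coprime r s ->
  x \in G -> y \in G ->
  conj_in G (x ^+ r) (y ^+ r) -> conj_in G (x ^+ s) (y ^+ s) ->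
  (forall d, proper_divisor d r -> ~ conj_in G (x ^+ d) (y ^+ d)) ->
  (forall d, proper_divisor d s -> ~ conj_in G (x ^+ d) (y ^+ d)) ->
  [/\ (r * s %| #|G|)%N, #|G| <> (r * s)%N,
      (~~ odd (r * s) -> #|G| <> (2 * (r * s))%N)
    & ((r * s) %% 4 = 2 -> (2 * (r * s) %| #|G|)%N)].
Proof.
move=> r_gt1 s_gt1 co_rs Gx Gy [h Gh xhr] [g Gg xgs] min_r min_s.
have co_sr : coprime s r by rewrite coprime_sym.
have rs_x := dvdn_rs_order r_gt1 s_gt1 co_rs Gh Gg xhr xgs min_r min_s.
have x_G := order_dvdG Gx.
split.
- exact: dvdn_trans rs_x x_G.
- move=> oG; apply: (order_neq_card r_gt1 s_gt1 co_rs Gx Gh Gg xhr xgs min_r).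
  by apply/eqP; rewrite eqn_leq dvdn_leq ?cardG_gt0 //= oG dvdn_leq ?order_gt0.
- rewrite oddM negb_and => /orP[r_even | s_even].
    exact: (card_neq_2rs r_gt1 s_gt1 co_rs Gx Gh Gg xhr xgs min_r min_s).
  rewrite [(r * s)%N]mulnC.
  exact: (card_neq_2rs s_gt1 r_gt1 co_sr Gx Gg Gh xgs xhr min_s min_r).
- move=> rs_mod4; have : ~~ odd (r * s).
    by rewrite (divn_eq (r * s) 4) rs_mod4 oddD oddM andbF.
  rewrite oddM negb_and => /orP[r_even | s_even].
    exact: (dvdn_2rs_card r_gt1 s_gt1 co_rs Gx Gy Gh Gg xhr xgs min_r min_s).
  rewrite [(r * s)%N]mulnC in rs_mod4 *.
  exact: (dvdn_2rs_card s_gt1 r_gt1 co_sr Gx Gy Gg Gh xgs xhr min_s min_r).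
Qed.
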